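(* Let $n,m\ge 1$, let $\boldsymbol{W}=(w_{ij})\in\mathbb{R}^{n\times n}$ be a symmetric matrix with non-negative entries, let $\boldsymbol{S}=(s_{kr})\in[0,1]^{m\times m}$ be symmetric with $s_{kk}=0$ for all $k$, let $\boldsymbol{\gamma}=(\gamma_1,\dots,\gamma_m)\in\mathbb{R}^m$, $\boldsymbol{\rho}=(\rho_1,\dots,\rho_m)\in[\frac{\pi}{4},\frac{\pi}{2})^m$ and $\alpha\in\mathbb{R}$. Consider the HoMTask Hopfield network $\mathcal{H}=\langle \boldsymbol{W},\boldsymbol{\gamma},\boldsymbol{\rho},\boldsymbol{S}\rangle$ whose states are matrices $\boldsymbol{X}=(x_{ik})$, $1\le i\le n$, $1\le k\le m$, with $x_{ik}\in\{\sin\rho_k,-\cos\rho_k\}$, with energy $$E_{\mathcal{H}}(\boldsymbol{X})=\sum_{k=1}^m\Big(-\tfrac12 {\boldsymbol{x}^{(k)}}^T\boldsymbol{W}\boldsymbol{x}^{(k)}+\gamma_k\sum_{i=1}^n x_{ik}+\tfrac{\alpha}{2}\Big(S_k\sum_{i=1}^n x_{ik}^2-\sum_{r\ne k}s_{kr}\sum_{i=1}^n x_{ik}x_{ir}\Big)\Big),$$ where $\boldsymbol{x}^{(k)}$ is the $k$-th column of $\boldsymbol{X}$ and $S_k=\sum_{r=1}^m s_{kr}$. Under the asynchronous dynamics in which, at each time step, a single neuron $(i,k)$ is updated by $$x_{ik}(t+1)=\begin{cases}\sin\rho_k & \text{if } \phi_{ik}(t)>0,\\ -\cos\rho_k & \text{if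 } \phi_{ik}(t)\le 0,\end{cases}\qquad \phi_{ik}(t)=\sum_{j=1}^n w_{ij}x_{jk}(t)-\theta_{ik}+\alpha\sum_{r\ne k}s_{kr}x_{ir}(t),$$ with $\theta_{ik}=\gamma_k+\frac{\alpha S_k}{2}(\sin\rho_k-\cos\rho_k)$ (all other neurons unchanged, and all $nm$ neurons updated in random order in each block of $nm$ consecutive steps), the network, starting from any initial state, eventually reaches a stable state (a state that no further neuron update changes), and this stable state is a local minimum of $E_{\mathcal{H}}$.
   Context: A HoMTask network consists of $m$ copies (one per task $k$) of a Hopfield network on the same $n$ neurons with weights $\boldsymbol{W}$; copy $k$ has neuron activation values $\{\sin\rho_k,-\cos\rho_k\}$ and activation threshold $\gamma_k$, and neuron $i$ of copy $k$ is additionally coupled to neuron $i$ of copy $r$ with weight proportional to $\alpha s_{kr}$. Each update does not increase the energy, where a local minimum is understood as a state from which no single-neuron update (by the rule above) decreases the energy. *)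

From HB Require Import structures.
From mathcomp Require Import all_boot all_order all_algebra.
From mathcomp Require Import reals trigo.
Set Implicit Arguments. Unset Strict Implicit. Unset Printing Implicit Defensive.
Import Order.TTheory GRing.Theory Num.Theory.
Local Open Scope ring_scope.

Section HoMTask.
Variable R : realType.
Variables n m : nat.

Definition Ssum (S : 'M[R]_m) (k : 'I_m) : R := \sum_(r < m) S k r.

Definition valid_state (rho : 'I_m -> R) (X : 'M[R]_(n, m)) : Prop :=
  forall i k, X i k = sin (rho k) \/ X i k = - cos (rho k).

Definition energy (W : 'M[R]_n) (gamma : 'I_m -> R) (S : 'M[R]_m) (alpha : R)
    (X : 'M[R]_(n, m)) : R :=
  \sum_(k < m)
    ( - (1/2) * (\sum_(i < n) \sum_(j < n) X i k * W i j * X j k)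
      + gamma k * (\sum_(i < n) X i k)
      + alpha / 2 *
        (Ssum S k * (\sum_(i < n) X i k ^+ 2)
         - \sum_(r < m | r != k) S k r * (\sum_(i < n) X i k * X i r))).

Definition theta (gamma rho : 'I_m -> R) (S : 'M[R]_m) (alpha : R) (k : 'I_m) : R :=
  gamma k + alpha * Ssum S k / 2 * (sin (rho k) - cos (rho k)).

Definition phi (W : 'M[R]_n) (gamma rho : 'I_m -> R) (S : 'M[R]_m) (alpha : R)
    (X : 'M[R]_(n, m)) (i : 'I_n) (k : 'I_m) : R :=
  \sum_(j < n) W i j * X j k - theta gamma rho S alpha k
  + alpha * \sum_(r < m | r != k) S k r * X i r.

Definition update (W : 'M[R]_n) (gamma rho : 'I_m -> R) (S : 'M[R]_m) (alpha : R)
    (X : 'M[R]_(n, m)) (i : 'I_n) (k : 'I_m) : 'M[R]_(n, m) :=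
  \matrix_(i', k')
    if (i' == i) && (k' == k) then
      (if 0 < phi W gamma rho S alpha X i k then sin (rho k) else - cos (rho k))
    else X i' k'.

Fixpoint traj (W : 'M[R]_n) (gamma rho : 'I_m -> R) (S : 'M[R]_m) (alpha : R)
    (sigma : nat -> 'I_n * 'I_m) (X0 : 'M[R]_(n, m)) (t : nat) : 'M[R]_(n, m) :=
  match t with
  | 0 => X0
  | t'.+1 => let X := traj W gamma rho S alpha sigma X0 t' in
             update W gamma rho S alpha X (sigma t').1 (sigma t').2
  end.

Definition block_schedule (sigma : nat -> 'I_n * 'I_m) : Prop :=
  forall (b : nat) (p : 'I_n * 'I_m),
    exists t : nat, (t < n * m)%N /\ sigma (b * (n * m) + t)%N = p.

Definition stable_state (W : 'M[R]_n) (gamma rho : 'I_m -> R) (S : 'M[R]_m) (alpha : R)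
    (X : 'M[R]_(n, m)) : Prop :=
  forall i k, update W gamma rho S alpha X i k = X.

Definition local_min (W : 'M[R]_n) (gamma rho : 'I_m -> R) (S : 'M[R]_m) (alpha : R)
    (X : 'M[R]_(n, m)) : Prop :=
  forall i k, energy W gamma S alpha X <= energy W gamma S alpha (update W gamma rho S alpha X i k).

End HoMTask.

From HB Require Import structures.
From mathcomp Require Import all_boot all_order all_algebra.
From mathcomp Require Import reals trigo.
From mathcomp Require Import ring lra.
Set Implicit Arguments. Unset Strict Implicit. Unset Printing Implicit Defensive.
Import Order.TTheory GRing.Theory Num.Theory.

(* The energy is a Lyapunov function of the asynchronous dynamics.  Changing
   neuron (i,k) by d changes E by -d phi_ik - d^2 w_ii / 2: the self-coupling
   term of the energy is compensated by the shift in theta_ik, because the old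
   and new values are both roots of (z - sin rho_k)(z + cos rho_k).  Since d has
   the sign of phi_ik, E never increases, and strictly decreases unless
   phi_ik <= 0, in which case the sum of all entries drops.  Valid states form a
   finite set, so the lexicographic key (E, sum of entries) can drop only
   finitely often; a block of nm steps along which it does not drop updates
   every neuron without effect, so it starts at a stable state. *)

Lemma card_lt_image_lt (K : finType) disp (T : porderType disp) (f : K -> T) (k : K) (t : T) :
  (f k < t)%O -> #|[set k' | (f k' < f k)%O]| < #|[set k' | (f k' < t)%O]|.
Proof.
move=> lt_kt; apply: proper_card; apply/properP; split.
  by apply/subsetP => k'; rewrite !inE => /lt_trans; apply.
by exists k; rewrite !inE ?lt_kt // ltxx.
Qed.

Section BlockConvergence.
Variables (T I : Type) (valid : T -> Prop) (step : T -> I -> T) (rank : T -> nat).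
Hypothesis step_valid : forall x p, valid x -> valid (step x p).
Hypothesis step_fix_or_rank_lt :
  forall x p, valid x -> step x p = x \/ rank (step x p) < rank x.
Variables (L : nat) (sigma : nat -> I) (x : nat -> T).
Hypothesis x_succ : forall t, x t.+1 = step (x t) (sigma t).
Hypothesis x0_valid : valid (x 0).
Hypothesis sigma_blocks : forall b p, exists t, t < L /\ sigma (b * L + t) = p.

Definition fixed_point y := forall p, step y p = y.

Lemma traj_valid t : valid (x t).
Proof. by elim: t => [|t IH] //; rewrite x_succ; apply: step_valid. Qed.

Lemma traj_fix_or_rank_lt t : x t.+1 = x t \/ rank (x t.+1) < rank (x t).
Proof. by rewrite x_succ; apply: step_fix_or_rank_lt; apply: traj_valid. Qed.

Lemma traj_rank_nonincr t j : rank (x (t + j)) <= rank (x t).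
Proof.
elim: j => [|j IH]; first by rewrite addn0.
by rewrite addnS; case: (traj_fix_or_rank_lt (t + j)) => [->|/ltnW/leq_trans]; last apply.
Qed.

Lemma traj_const_of_rank_eq t j : rank (x t) <= rank (x (t + j)) ->
  forall j', j' <= j -> x (t + j') = x t.
Proof.
move=> rank_eq; elim=> [|j' IH] lt_j'j; first by rewrite addn0.
rewrite addnS; case: (traj_fix_or_rank_lt (t + j')) => [->|drop]; first exact/IH/ltnW.
have end_eq : (t + j').+1 + (j - j'.+1) = t + j by rewrite -addnS -addnA subnKC.
have := traj_rank_nonincr (t + j').+1 (j - j'.+1); rewrite end_eq => le_end.
have := leq_ltn_trans (leq_trans rank_eq le_end) drop.
by rewrite (IH (ltnW lt_j'j)) ltnn.
Qed.

Lemma block_fixed_or_rank_lt b :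
  fixed_point (x (b * L)) \/ rank (x (b * L + L)) < rank (x (b * L)).
Proof.
case: (ltnP (rank (x (b * L + L))) (rank (x (b * L)))) => [|rank_eq]; first by right.
left=> p; have [t [lt_tL sigma_t]] := sigma_blocks b p.
have const := traj_const_of_rank_eq rank_eq.
by rewrite -sigma_t -{1}(const t (ltnW lt_tL)) -x_succ -addnS const.
Qed.

Lemma traj_fixed_point_stays t0 : fixed_point (x t0) -> forall t, t0 <= t -> x t = x t0.
Proof.
move=> fix_t0 t /subnKC <-; elim: (t - t0) => [|j IH]; first by rewrite addn0.
by rewrite addnS x_succ IH fix_t0.
Qed.

Lemma traj_exists_fixed_point : exists t, fixed_point (x t).
Proof.
suff: forall N b, rank (x (b * L)) < N -> exists t, fixed_point (x t).
  by move=> /(_ (rank (x 0)).+1 0); rewrite mul0n; apply.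
elim=> [//|N IH] b; rewrite ltnS => rank_b.
case: (block_fixed_or_rank_lt b) => [fix_b|drop]; first by exists (b * L).
by apply: (IH b.+1); rewrite mulSn addnC (leq_trans drop).
Qed.
End BlockConvergence.

Local Open Scope ring_scope.
Section QuadraticForm.
Variable R : comNzRingType.

Lemma mxtrace_delta_mul p q (k : 'I_q) (i : 'I_p) (M : 'M[R]_(p, q)) :
  \tr (delta_mx k i *m M) = M i k.
Proof.
rewrite /mxtrace (bigD1 k) //= big1 => [|l /negPf lk]; rewrite mxE.
  rewrite (bigD1 i) //= big1 => [|j /negPf ji]; rewrite mxE ?eqxx ?mul1r ?addr0 //.
  by rewrite ji mul0r.
by apply: big1 => j _; rewrite mxE lk mul0r.
Qed.

Lemma trmx_add_delta p q (X : 'M[R]_(p, q)) i k d :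
  (X + d *: delta_mx i k)^T = X^T + d *: delta_mx k i.
Proof. by apply/matrixP => a b; rewrite !mxE andbC. Qed.

Definition qform p q (A : 'M[R]_p) (X : 'M[R]_(p, q)) : R := \tr (X^T *m A *m X).

Lemma qform_add_delta p q (A : 'M[R]_p) (X : 'M[R]_(p, q)) i k d : A^T = A ->
  qform A (X + d *: delta_mx i k) = qform A X + 2 * d * (A *m X) i k + d ^+ 2 * A i i.
Proof.
move=> Asym; rewrite /qform trmx_add_delta.
rewrite !(mulmxDl, mulmxDr) -!scalemxAl -!scalemxAr !mxtraceD !mxtraceZ.
have cross : \tr (X^T *m A *m delta_mx i k) = \tr (delta_mx k i *m A *m X).
  by rewrite -mxtrace_tr !trmx_mul trmx_delta trmxK Asym mulmxA.
rewrite cross -!mulmxA mxtrace_delta_mul.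
rewrite [\tr (delta_mx k i *m _)]mxtrace_mulC -mulmxA mul_delta_mx [\tr (A *m _)]mxtrace_mulC.
rewrite mxtrace_delta_mul; ring.
Qed.

Definition weighted_sum p q (c : 'I_q -> R) (X : 'M[R]_(p, q)) : R :=
  \sum_(k < q) c k * \sum_(i < p) X i k.

Lemma weighted_sum_add_delta p q (c : 'I_q -> R) (X : 'M[R]_(p, q)) i k d :
  weighted_sum c (X + d *: delta_mx i k) = weighted_sum c X + c k * d.
Proof.
have column k' : \sum_(i' < p) (X + d *: delta_mx i k) i' k'
                 = \sum_(i' < p) X i' k' + (k' == k)%:R * d.
  under eq_bigr do rewrite !mxE; rewrite big_split /=; congr (_ + _).
  rewrite (bigD1 i) //= big1 => [|i' /negPf ->]; last by rewrite mulr0.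
  by rewrite eqxx addr0 mulrC.
rewrite /weighted_sum; under eq_bigr do rewrite column mulrDr.
rewrite big_split /=; congr (_ + _).
rewrite (bigD1 k) //= big1 => [|k' /negPf ->]; last by rewrite mul0r mulr0.
by rewrite eqxx mul1r addr0.
Qed.
End QuadraticForm.

Section Energy.
Variables (R : realType) (n m : nat) (W : 'M[R]_n) (S : 'M[R]_m)
  (gamma : 'I_m -> R) (alpha : R).
Hypotheses (W_sym : W^T = W) (S_sym : S^T = S) (S_diag0 : forall k, S k k = 0).

Definition laplacian : 'M[R]_m := diag_mx (\row_k Ssum S k) - S.

Lemma laplacian_sym : laplacian^T = laplacian.
Proof.
apply/matrixP => k r; rewrite !mxE [k == r]eq_sym.
have -> : S r k = S k r by rewrite -[in LHS]S_sym mxE.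
by case: eqVneq => [->|].
Qed.

Lemma energyE X : energy W gamma S alpha X =
  - (1/2) * qform W X + weighted_sum gamma X + alpha / 2 * qform laplacian X^T.
Proof.
rewrite /energy !big_split /= -!mulr_sumr; congr (_ * _ + _ + _ * _).
  apply: eq_bigr => k _; rewrite !mxE exchange_big; apply: eq_bigr => i _.
  rewrite !mxE mulr_suml; apply: eq_bigr => j _; by rewrite !mxE.
rewrite /qform trmxK mxtrace_mulC mulmxA mxtrace_mulC.
apply: eq_bigr => k _; rewrite !mxE.
rewrite [\sum_(r < m | r != k) _]big_rmcond => [|r /negPn/eqP ->]; last by rewrite S_diag0 mul0r.
under [RHS]eq_bigr do rewrite !mxE mulrBl.
rewrite sumrB; congr (_ - _).
  rewrite [RHS](bigD1 k) //= [X in _ + X]big1 => [|r /negPf rk]; last by rewrite eq_sym rk mul0r.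
  rewrite eqxx mulr1n addr0; congr (_ * _).
  by apply: eq_bigr => i _; rewrite mxE expr2.
by apply: eq_bigr => r _; congr (_ * _); apply: eq_bigr => i _; rewrite mxE mulrC.
Qed.

Lemma laplacian_mul_trmx (X : 'M[R]_(n, m)) i k :
  (laplacian *m X^T) k i = Ssum S k * X i k - \sum_(r < m) S k r * X i r.
Proof.
rewrite !mxE; under eq_bigr do rewrite !mxE mulrBl; rewrite sumrB; congr (_ - _).
rewrite (bigD1 k) //= [X in _ + X]big1 => [|r /negPf rk]; last by rewrite eq_sym rk mul0r.
by rewrite eqxx mulr1n addr0.
Qed.

Lemma offdiag_sum (F : 'I_m -> R) k :
  \sum_(r < m | r != k) S k r * F r = \sum_(r < m) S k r * F r.
Proof. by rewrite big_rmcond => // r /negPn/eqP ->; rewrite S_diag0 mul0r. Qed.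

Variable rho : 'I_m -> R.

(* The last summand vanishes when [X i k] and [X i k + d] are both activation
   values: this is what the choice of [theta] achieves. *)
Lemma energy_add_delta X i k d :
  energy W gamma S alpha (X + d *: delta_mx i k) = energy W gamma S alpha X
  - d * phi W gamma rho S alpha X i k - d ^+ 2 / 2 * W i i
  + alpha * Ssum S k / 2 * ((X i k + d - sin (rho k)) * (X i k + d + cos (rho k))
                            - (X i k - sin (rho k)) * (X i k + cos (rho k))).
Proof.
rewrite !energyE trmx_add_delta !qform_add_delta ?laplacian_sym // weighted_sum_add_delta.
rewrite laplacian_mul_trmx /phi /theta offdiag_sum !mxE eqxx mulr1n S_diag0.
by field.
Qed.
End Energy.

Section Dynamics.
Variables (R : realType) (n m : nat) (W : 'M[R]_n) (S : 'M[R]_m)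
  (gamma rho : 'I_m -> R) (alpha : R).
Hypotheses (W_sym : W^T = W) (W_diag_ge0 : forall i, 0 <= W i i).
Hypotheses (S_sym : S^T = S) (S_diag0 : forall k, S k k = 0).
Hypothesis sin_add_cos_ge0 : forall k, 0 <= sin (rho k) + cos (rho k).
Implicit Types X : 'M[R]_(n, m).

Local Notation E := (energy W gamma S alpha).
Local Notation upd := (update W gamma rho S alpha).
Local Notation lfield := (phi W gamma rho S alpha).

Lemma update_delta X i k : upd X i k = X + (upd X i k i k - X i k) *: delta_mx i k.
Proof.
apply/matrixP => i' k'; rewrite !mxE.
case: ifP => [/andP[/eqP -> /eqP ->]|_] /=; first by rewrite !eqxx mulr1 subrKC.
by rewrite mulr0 addr0.
Qed.

Lemma update_valid X i k : valid_state rho X -> valid_state rho (upd X i k).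
Proof.
move=> hX i' k'; rewrite mxE; case: ifP => [/andP[_ /eqP ->]|_]; last exact: hX.
by case: ifP; [left | right].
Qed.

Lemma valid_state_root X i k : valid_state rho X ->
  (X i k - sin (rho k)) * (X i k + cos (rho k)) = 0.
Proof. by move=> /(_ i k) [] ->; rewrite ?subrr ?mul0r ?addNr ?mulr0. Qed.

Lemma energy_update X i k : valid_state rho X ->
  E (upd X i k) = E X - (upd X i k i k - X i k) * lfield X i k
                      - (upd X i k i k - X i k) ^+ 2 / 2 * W i i.
Proof.
move=> hX; rewrite {1}update_delta (energy_add_delta _ _ W_sym S_sym S_diag0 rho) subrKC.
rewrite [(upd X i k i k - sin _) * _]valid_state_root; last exact: update_valid.
by rewrite valid_state_root // subrr mulr0 addr0.
Qed.

Lemma update_change_sign X i k : valid_state rho X ->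
  upd X i k i k - X i k != 0 ->
  (0 < upd X i k i k - X i k /\ 0 < lfield X i k)
  \/ (upd X i k i k - X i k < 0 /\ lfield X i k <= 0).
Proof.
move=> hX; have hsc := sin_add_cos_ge0 k; rewrite mxE !eqxx /=.
case: ifP => hphi; case: (hX i k) => ->; rewrite ?subrr ?eqxx // => nz.
  by left; split=> //; rewrite lt_def nz /=; lra.
by right; split; [rewrite lt_neqAle nz /=; lra | rewrite leNgt hphi].
Qed.

Definition descent_key X : R *l R := (E X, weighted_sum (fun _ => 1) X).

Lemma update_descends X i k : valid_state rho X ->
  upd X i k = X \/ (descent_key (upd X i k) < descent_key X)%O.
Proof.
move=> hX; set d := upd X i k i k - X i k.
have [d0|nz] := eqVneq d 0; first by left; rewrite update_delta -/d d0 scale0r addr0.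
right; rewrite ltEprodlexi /= energy_update // -/d.
rewrite [in weighted_sum _ (upd X i k)]update_delta -/d weighted_sum_add_delta mul1r.
have sq : 0 <= d ^+ 2 / 2 * W i i.
  by rewrite mulr_ge0 ?W_diag_ge0 // divr_ge0 ?sqr_ge0.
case: (update_change_sign hX nz) => [[dpos fpos]|[dneg fneg]].
  have dfield : 0 < d * lfield X i k by exact: mulr_gt0.
  have lt_E : E X - d * lfield X i k - d ^+ 2 / 2 * W i i < E X by lra.
  by rewrite (ltW lt_E) /= leNgt lt_E.
have dfield : 0 <= d * lfield X i k by apply: mulr_le0 => //; exact: ltW.
apply/andP; split; first lra.
by rewrite gtrDl dneg implybT.
Qed.

Definition bits_state (B : 'M[bool]_(n, m)) : 'M[R]_(n, m) :=
  \matrix_(i, k) if B i k then sin (rho k) else - cos (rho k).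

Lemma valid_state_bits X : valid_state rho X -> exists B, bits_state B = X.
Proof.
move=> hX; exists (\matrix_(i, k) (X i k == sin (rho k))).
apply/matrixP => i k; rewrite !mxE; case: eqP => [//|ne].
by case: (hX i k) => e; [case: ne | rewrite e].
Qed.

Definition descent_rank X : nat :=
  #|[set B | (descent_key (bits_state B) < descent_key X)%O]|.

Lemma update_fix_or_rank_lt X i k : valid_state rho X ->
  upd X i k = X \/ (descent_rank (upd X i k) < descent_rank X)%N.
Proof.
move=> hX; case: (update_descends i k hX) => [|lt_key]; [by left | right].
have [B eB] := valid_state_bits (update_valid i k hX).
by rewrite /descent_rank -eB; apply: card_lt_image_lt; rewrite eB.
Qed.
End Dynamics.

Lemma sin_add_cos_gt0 (R : realType) (x : R) : 0 < x < pi / 2 -> 0 < sin x + cos x.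
Proof.
move=> /andP[x_gt0 x_lt]; rewrite addr_gt0 ?sin_gt0_pihalf ?cos_gt0_pihalf ?x_gt0 ?x_lt //.
by rewrite (lt_trans _ x_gt0) // oppr_lt0 divr_gt0 ?pi_gt0.
Qed.

Theorem theorem1 (R : realType) (n m : nat) (hn : (0 < n)%N) (hm : (0 < m)%N)
  (W : 'M[R]_n) (S : 'M[R]_m) (gamma rho : 'I_m -> R) (alpha : R)
  (hWsym : W^T = W) (hWnn : forall i j, 0 <= W i j)
  (hSsym : S^T = S) (hS01 : forall k r, 0 <= S k r <= 1)
  (hSdiag : forall k, S k k = 0)
  (hrho : forall k, pi / 4 <= rho k < pi / 2)
  (sigma : nat -> 'I_n * 'I_m) (hsigma : block_schedule sigma)
  (X0 : 'M[R]_(n, m)) (hX0 : valid_state rho X0) :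
  exists T : nat,
    stable_state W gamma rho S alpha (traj W gamma rho S alpha sigma X0 T)
    /\ (forall t, (T <= t)%N ->
          traj W gamma rho S alpha sigma X0 t = traj W gamma rho S alpha sigma X0 T)
    /\ local_min W gamma rho S alpha (traj W gamma rho S alpha sigma X0 T).
Proof.
have sin_cos k : 0 <= sin (rho k) + cos (rho k).
  have /andP[lo hi] := hrho k; apply/ltW/sin_add_cos_gt0.
  by rewrite hi andbT (lt_le_trans _ lo) // divr_gt0 ?pi_gt0.
pose step X (p : 'I_n * 'I_m) := update W gamma rho S alpha X p.1 p.2.
have step_valid X p : valid_state rho X -> valid_state rho (step X p).
  exact: update_valid.
pose rank := descent_rank W S gamma rho alpha.
have step_rank X p : valid_state rho X -> step X p = X \/ (rank (step X p) < rank X)%N.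
  exact: update_fix_or_rank_lt.
have x_succ t : traj W gamma rho S alpha sigma X0 t.+1
                = step (traj W gamma rho S alpha sigma X0 t) (sigma t) by [].
have [T fixT] := traj_exists_fixed_point step_valid step_rank x_succ hX0 hsigma.
exists T; split; first by move=> i k; exact: (fixT (i, k)).
split; first exact: traj_fixed_point_stays.
by move=> i k; rewrite /local_min [update _ _ _ _ _ _ i k](fixT (i, k)).
Qed.
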